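(* In the MLR-DMPC setting described in the context, let $k$ be a round. Suppose that for all $i\neq j$ with $i\notin\tilde{\mathcal A}_{ET}(k)$, $j\notin\tilde{\mathcal A}_{ET}(k)$, for all $\tilde p_j\in\mathcal D_j(k)$ and $\tilde p_i\in\mathcal D_i(k)$ and for all $h\in\{1,2,\dots,h_c\}$ $$\big\|\Theta^{-1}[\tilde p_j(hT_c+T|k-1)-\tilde p_i(hT_c+T|k-1)]\big\|_2\ge\hat d_{\min}.$$ Then for all such $i,j$, all $\tilde p_j\in\mathcal D_j(k+1)$ and $\tilde p_i\in\mathcal D_i(k+1)$, and all $h\in\{1,2,\dots,h_c\}$ $$\big\|\Theta^{-1}[\tilde p_j(hT_c|k)-\tilde p_i(hT_c|k)]\big\|_2\ge\hat d_{\min}.$$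
   Context: Setting (MLR-DMPC). There are $N$ UAVs indexed by $\mathcal A=\{1,\dots,N\}$ and $M$ compute units (CUs) indexed by $w\in\{1,\dots,M\}$, $1<M<N$. Rounds $k=0,1,\dots$ have length $T>0$; each consists of a computation phase followed by a communication phase where every device broadcasts at most one message and any message may be lost at any receiver. $\Theta$ is an invertible $3\times 3$ scaling matrix, $\hat d_{\min}>0$, $T_c>0$ with $T$ an integer multiple of $T_c$, $h_c\in\mathbb N$. Nominal model: $\dot{\hat x}_i=\hat f_i(\hat x_i,\hat u_i)$, position $\hat p_i=\hat g_{p,i}(\hat x_i)\in\mathbb R^3$. In round $k$ UAV $i$ follows reference $\hat x_i(\tau|k),\hat u_i(\tau|k)$ at time $kT+\tau$; if it receives in round $k$ a trajectory $\hat u_{i,w}(\cdot|k)$ from CU $w$, then $\hat u_i(\tau|k+1)=\hat u_{i,w}(\tau+T|k)$, else $\hat u_i(\tau|k+1)=\hat u_i(\tau+T|k)$ (a trajectory carried to the next round is the time-shift by $T$, i.e. $\tilde p_i(\cdot|k)=\tilde p_i(\cdot+T|k-1)$). Information trackers: each CU $w$ holds for each UAV $i$ a set $\mathcal D_{iw}(k)$ of candidate trajectories, written $\tilde x_i(\cdot|k-1),\tilde p_i(\cdot|k-1)$, flagged up-to-date or deprecated; it is updated each round from received messages: for each UAV whose metadata message was received, the tracker is reduced to the matching trajectory and marked up-to-date; if some tracker then has more than one element, or fewer than $M$ CU messages were received, all trackers are marked deprecated; every newly received CU trajectory for UAV $i$ is added to $\mathcal D_{iw}(k)$. $\mathcal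 D_i(k)$ denotes the common value of all non-deprecated trackers $\mathcal D_{iw}(k)$ (if all CUs are deprecated, the tracker of a virtual CU that receives all messages without loss and computes nothing). A CU with all trackers up-to-date selects, from a common set $\mathcal A_{ET}(k)$ of $M$ UAVs, one UAV and (if its tracker has exactly one element) computes and broadcasts a new trajectory for it; $\tilde{\mathcal A}_{ET}(k)\subseteq\mathcal A_{ET}(k)$ is the set of UAVs for which a new trajectory is computed in round $k$. *)

From HB Require Import structures.
From mathcomp Require Import all_boot all_order all_algebra.
Set Implicit Arguments. Unset Strict Implicit. Unset Printing Implicit Defensive.
Import Order.TTheory GRing.Theory Num.Theory.
Local Open Scope ring_scope.

(* A (position) trajectory tau |-> p~(tau | .) in R^3 (column vectors). *)
Definition traj (R : rcfType) := R -> 'cV[R]_3.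

Definition norm2 (R : rcfType) (v : 'cV[R]_3) : R :=
  Num.sqrt (\sum_(a < 3) v a 0 ^+ 2).

(* Time-shift by T: a trajectory carried to the next round. *)
Definition shiftT (R : rcfType) (T : R) (p : traj R) : traj R :=
  fun t => p (t + T).

(* UAV i gets a newly computed trajectory in round k, i.e. i \in A~_ET(k):
   some CU w broadcasts a trajectory for i in round k
   (msg k w = Some (i, p) means CU w computed trajectory p for UAV i). *)
Definition AtET (R : rcfType) (N M : nat)
  (msg : nat -> 'I_M -> option ('I_N * traj R)) (k : nat) : {set 'I_N} :=
  [set i | [exists w : 'I_M,
              match msg k w with Some (j, _) => j == i | None => false end]].

(* One round of the information-tracker update for UAV i:
   Dk  = tracker at round k (candidates p~_i(.|k-1)),
   Dk1 = tracker at round k+1 (candidates p~_i(.|k)).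
   If the metadata message of UAV i (identifying the trajectory [meta] it
   follows) is received, the tracker is reduced to the matching trajectory;
   the remaining candidates are carried to the next round (time shift by T);
   every received CU trajectory for UAV i is added. *)
Definition tracker_step (R : rcfType) (N M : nat) (T : R) (i : 'I_N)
  (Dk Dk1 : traj R -> Prop) (rcv_meta : bool) (meta : traj R)
  (rcv_cu : 'I_M -> bool) (msg : 'I_M -> option ('I_N * traj R)) : Prop :=
  forall p, Dk1 p <->
    (exists q, (Dk q /\ (rcv_meta -> q = meta)) /\ p = shiftT T q)
    \/ (exists w, rcv_cu w /\ msg w = Some (i, p)).

From HB Require Import structures.
From mathcomp Require Import all_boot all_order all_algebra.
Import Order.TTheory GRing.Theory Num.Theory.
Local Open Scope ring_scope.

(* A UAV outside A~_ET(k) receives no new trajectory in round k, so every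
   candidate in its tracker at round k+1 is the time shift by T of a
   candidate at round k; since p~(h Tc | k) = p~(h Tc + T | k-1), the
   separation assumed at round k is exactly the one claimed at round k+1. *)

Lemma notin_AtET {R : rcfType} {N M : nat}
    {msg : nat -> 'I_M -> option ('I_N * traj R)} {k : nat} {i : 'I_N} :
  i \notin AtET msg k -> forall w p, msg k w <> Some (i, p).
Proof.
move=> /negP iN w p msg_w; apply: iN.
by rewrite inE; apply/existsP; exists w; rewrite msg_w.
Qed.

Lemma tracker_step_shiftT {R : rcfType} {N M : nat} {T : R} {i : 'I_N}
    {Dk Dk1 : traj R -> Prop} {rcv_meta : bool} {meta : traj R}
    {rcv_cu : 'I_M -> bool} {msg : 'I_M -> option ('I_N * traj R)}
    {p : traj R} :
  tracker_step T i Dk Dk1 rcv_meta meta rcv_cu msg ->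
  (forall w q, msg w <> Some (i, q)) ->
  Dk1 p -> exists2 q, Dk q & p = shiftT T q.
Proof.
move=> step no_msg /step [[q [[Dq _] ->]] | [w [_ /no_msg []]]].
by exists q.
Qed.

Theorem lemma4 (R : rcfType) (N M : nat) (T Tc dmin : R) (hc : nat)
  (Theta : 'M[R]_3)
  (A_ET : nat -> {set 'I_N})
  (msg : nat -> 'I_M -> option ('I_N * traj R))
  (D : nat -> 'I_N -> traj R -> Prop)
  (rcv_meta : nat -> 'I_N -> bool) (meta : nat -> 'I_N -> traj R)
  (rcv_cu : nat -> 'I_M -> bool) (k : nat) :
  (1 < M)%N -> (M < N)%N -> 0 < T -> 0 < Tc ->
  (exists n : nat, T = n%:R * Tc) -> 0 < dmin -> Theta \in unitmx ->
  (forall r, #|A_ET r| = M) ->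
  (forall r w i p, msg r w = Some (i, p) -> i \in A_ET r) ->
  (forall r i, tracker_step T i (D r i) (D r.+1 i) (rcv_meta r i) (meta r i)
                 (rcv_cu r) (msg r)) ->
  (forall i j : 'I_N, i != j -> i \notin AtET msg k -> j \notin AtET msg k ->
     forall pj pi, D k j pj -> D k i pi ->
     forall h : nat, (1 <= h <= hc)%N ->
       dmin <= norm2 (invmx Theta *m (pj (h%:R * Tc + T) - pi (h%:R * Tc + T)))) ->
  forall i j : 'I_N, i != j -> i \notin AtET msg k -> j \notin AtET msg k ->
    forall pj pi, D k.+1 j pj -> D k.+1 i pi ->
    forall h : nat, (1 <= h <= hc)%N ->
      dmin <= norm2 (invmx Theta *m (pj (h%:R * Tc) - pi (h%:R * Tc))).
Proof.
move=> _ _ _ _ _ _ _ _ _ step sep_k i j ij iN jN pj pi Dpj Dpi h h_range.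
have [qj Dqj ->] := tracker_step_shiftT (step k j) (notin_AtET jN) Dpj.
have [qi Dqi ->] := tracker_step_shiftT (step k i) (notin_AtET iN) Dpi.
exact: sep_k ij iN jN qj qi Dqj Dqi h h_range.
Qed.
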